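(* Let $F$ and $G$ be objects in $\overline{\mathrm{Pro}}(\mathcal{C})$. Then every connected component of the poset of 1-morphisms from $F$ to $G$ (that is, every morphism from $F$ to $G$ in $\overline{\mathrm{Pro}}(\mathcal{C})$) is directed.
   Context: Let $\mathcal{C}$ be a category. Objects of $\overline{\mathrm{Pro}}(\mathcal{C})$ are diagrams $F:A\to\mathcal{C}$ with $A$ a cofinite directed poset of infinite height (poset as category with $u\to v$ iff $u\ge v$; cofinite: each $\{z\le x\}$ finite; infinite height: every element has a strictly larger one). A 1-morphism $F^A\to G^B$ is a pair $(\alpha,\phi)$ with $\alpha:B\to A$ strictly increasing and $\phi:F\circ\alpha\to G$ a natural transformation; 1-morphisms are partially ordered by $(\alpha',\phi')\geq(\alpha,\phi)$ iff $\alpha'(b)\ge\alpha(b)$ and $\phi'_b=\phi_b\circ F(\alpha'(b)\to\alpha(b))$ for all $b\in B$. Morphisms $F\to G$ in $\overline{\mathrm{Pro}}(\mathcal{C})$ are the connected components of this poset. *)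

From Stdlib Require Import List Relations.
Set Implicit Arguments.
Unset Strict Implicit.

(* A (locally Type-valued) category.  [comp g f] is  g o f. *)
Record Category := {
  Obj :> Type;
  Hom : Obj -> Obj -> Type;
  idm : forall x, Hom x x;
  comp : forall x y z, Hom y z -> Hom x y -> Hom x z;
  comp_id_l : forall x y (f : Hom x y), comp (idm y) f = f;
  comp_id_r : forall x y (f : Hom x y), comp f (idm x) = f;
  comp_assoc : forall w x y z (h : Hom y z) (g : Hom x y) (f : Hom w x),
      comp h (comp g f) = comp (comp h g) f
}.
Arguments Hom {c} _ _.
Arguments idm {c} _.
Arguments comp {c x y z} _ _.

Record CDPoset := {
  carrier :> Type;
  le : carrier -> carrier -> Prop;
  le_refl : forall x, le x x;
  le_antisym : forall x y, le x y -> le y x -> x = y;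
  le_trans : forall x y z, le x y -> le y z -> le x z;
  dir_inhabited : inhabited carrier;
  dir_ub : forall x y, exists z, le x z /\ le y z;
  cofinite : forall x, exists l : list carrier, forall z, le z x -> In z l;
  inf_height : forall x, exists y, le x y /\ x <> y
}.
Arguments le {c} _ _.

Definition lt {A : CDPoset} (x y : A) : Prop := le x y /\ x <> y.

(* Objects of \overline{Pro}(C): diagrams F : A -> C, where A is viewed as a
   category with an arrow u -> v iff u >= v, i.e. [le v u]. *)
Record ProObj (C : Category) := {
  idx : CDPoset;
  Fo : idx -> C;
  Fm : forall u v : idx, le v u -> Hom (Fo u) (Fo v);
  Fm_id : forall u (h : le u u), Fm h = idm (Fo u);
  Fm_comp : forall u v w (h1 : le v u) (h2 : le w v) (h3 : le w u),
      Fm h3 = comp (Fm h2) (Fm h1)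
}.
Arguments idx {C} _.
Arguments Fo {C} _ _.
Arguments Fm {C} _ {u v} _.

Record OneMor (C : Category) (F G : ProObj C) := {
  alpha : idx G -> idx F;
  alpha_strict : forall b b' : idx G, lt b b' -> lt (alpha b) (alpha b');
  phi : forall b : idx G, Hom (Fo F (alpha b)) (Fo G b);
  phi_nat : forall (b b' : idx G) (h : le b' b) (h' : le (alpha b') (alpha b)),
      comp (Fm G h) (phi b) = comp (phi b') (Fm F h')
}.
Arguments alpha {C F G} _ _.
Arguments phi {C F G} _ _.

Definition mor_le {C : Category} {F G : ProObj C} (m m' : OneMor F G) : Prop :=
  forall b : idx G, exists h : le (alpha m b) (alpha m' b),
      phi m' b = comp (phi m b) (Fm F h).

Definition connected {C : Category} {F G : ProObj C} : OneMor F G -> OneMor F G -> Prop :=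
  clos_refl_sym_trans (OneMor F G) mor_le.

(* A connected component (given by a representative m) is directed:
   it is nonempty (it contains m) and any two of its elements have an upper
   bound inside it. *)
Definition component_directed {C : Category} {F G : ProObj C} (m : OneMor F G) : Prop :=
  forall m1 m2, connected m m1 -> connected m m2 ->
    exists m3, connected m m3 /\ mor_le m1 m3 /\ mor_le m2 m3.

From Stdlib Require Import List Relations ClassicalEpsilon Lia.

(* A 1-morphism (alpha, phi) can be pushed up along any strictly increasing
   a >= alpha, by precomposing phi_b with F(a(b) -> alpha(b)).  So two
   1-morphisms u, v above a common m have a common upper bound as soon as
   some strictly increasing map dominates both alpha_u and alpha_v.
   Pointwise bounds exist because the index poset A of F is directed; to make
   them strictly increasing, climb along the index poset B of G: at stage
   n+1 bound the successors of the stage-n values at the finitely many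
   b' <= b, and stop at the stage given by the number of elements below b.
   A zigzag in a connected component then collapses to one upper bound. *)

Lemma le_lt_trans {A : CDPoset} {x y z : A} : le x y -> lt y z -> lt x z.
Proof.
  intros Hxy [Hyz Hne]. split; [exact (le_trans Hxy Hyz)|].
  intros <-. apply Hne, le_antisym; assumption.
Qed.

Lemma lt_le_trans {A : CDPoset} {x y z : A} : lt x y -> le y z -> lt x z.
Proof.
  intros [Hxy Hne] Hyz. split; [exact (le_trans Hxy Hyz)|].
  intros <-. apply Hne, le_antisym; assumption.
Qed.

Section Bounds.
Variable A : CDPoset.

Definition ub (x y : A) : A :=
  proj1_sig (constructive_indefinite_description _ (dir_ub x y)).

Lemma le_ub_l (x y : A) : le x (ub x y).
Proof. exact (proj1 (proj2_sig (constructive_indefinite_description _ (dir_ub x y)))). Qed.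

Lemma le_ub_r (x y : A) : le y (ub x y).
Proof. exact (proj2 (proj2_sig (constructive_indefinite_description _ (dir_ub x y)))). Qed.

Definition ub_list (x : A) (l : list A) : A := fold_right ub x l.

Lemma le_ub_list (x y : A) (l : list A) : In y l -> le y (ub_list x l).
Proof.
  induction l as [|z l IH]; simpl; [tauto|].
  intros [<-|Hy]; [apply le_ub_l|exact (le_trans (IH Hy) (le_ub_r _ _))].
Qed.

Definition next (x : A) : A :=
  proj1_sig (constructive_indefinite_description _ (inf_height x)).

Lemma lt_next (x : A) : lt x (next x).
Proof. exact (proj2_sig (constructive_indefinite_description _ (inf_height x))). Qed.

End Bounds.

Arguments ub {A} x y.
Arguments ub_list {A} x l.
Arguments next {A} x.
Arguments le_ub_l {A} x y.
Arguments le_ub_r {A} x y.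
Arguments le_ub_list {A} x y l.
Arguments lt_next {A} x.

Section Rank.
Variable B : CDPoset.

Definition decide_le (z b : B) : bool :=
  if excluded_middle_informative (le z b) then true else false.

Definition lower_set (b : B) : list B :=
  nodup (fun x y => excluded_middle_informative (x = y))
    (filter (fun z => decide_le z b)
       (proj1_sig (constructive_indefinite_description _ (cofinite b)))).

Lemma In_lower_set (b z : B) : In z (lower_set b) <-> le z b.
Proof.
  unfold lower_set. rewrite nodup_In, filter_In. unfold decide_le.
  destruct (constructive_indefinite_description _ (cofinite b)) as [l Hl]; simpl.
  destruct (excluded_middle_informative (le z b)) as [Hz|Hz]; split.
  - tauto.
  - intros Hle. split; [exact (Hl z Hle)|reflexivity].
  - intros [_ Hf]. discriminate Hf.
  - intros Hle. contradiction.
Qed.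

Definition rank (b : B) : nat := length (lower_set b).

Lemma rank_lt (b' b : B) : lt b' b -> rank b' < rank b.
Proof.
  intros [Hle Hne]. unfold rank.
  change (length (b :: lower_set b') <= length (lower_set b)).
  apply NoDup_incl_length.
  - constructor; [|apply NoDup_nodup].
    rewrite In_lower_set. intros Hb. exact (Hne (le_antisym Hle Hb)).
  - intros z [<-|Hz]; apply In_lower_set; [apply le_refl|].
    exact (le_trans (proj1 (In_lower_set _ _) Hz) Hle).
Qed.

End Rank.

Arguments lower_set {B} b.
Arguments rank {B} b.
Arguments rank_lt {B b' b}.

Section StrictlyIncreasingBound.
Variables (A B : CDPoset) (h : B -> A).

Fixpoint climb (n : nat) (b : B) : A :=
  match n with
  | 0 => h b
  | S n => ub_list (next (climb n b)) (map (fun b' => next (climb n b')) (lower_set b))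
  end.

Lemma climb_lt_succ (n : nat) {b' b : B} : le b' b -> lt (climb n b') (climb (S n) b).
Proof.
  intros Hb. apply (lt_le_trans (lt_next _)). simpl.
  apply le_ub_list, (in_map (fun b' => next (climb n b'))), In_lower_set, Hb.
Qed.

Lemma climb_mono (n m : nat) (b : B) : n <= m -> le (climb n b) (climb m b).
Proof.
  induction 1; [apply le_refl|].
  exact (le_trans IHle (proj1 (climb_lt_succ m (le_refl b)))).
Qed.

Definition strict_bound (b : B) : A := climb (rank b) b.

Lemma le_strict_bound (b : B) : le (h b) (strict_bound b).
Proof. exact (climb_mono 0 (rank b) b ltac:(lia)). Qed.

Lemma strict_bound_lt (b' b : B) : lt b' b -> lt (strict_bound b') (strict_bound b).
Proof.
  intros Hb. unfold strict_bound. pose proof (rank_lt Hb) as Hr.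
  destruct (rank b) as [|k]; [lia|].
  apply (le_lt_trans (climb_mono (rank b') k b' ltac:(lia))).
  exact (climb_lt_succ k (proj1 Hb)).
Qed.

End StrictlyIncreasingBound.

Arguments strict_bound {A B} h b.
Arguments le_strict_bound {A B} h b.
Arguments strict_bound_lt {A B} h [b' b].

Section OneMorphisms.
Context {C : Category} {F G : ProObj C}.

Lemma Fm_compose {u v w : idx F} (h1 : le v u) (h2 : le w v) (h3 : le w u) :
  comp (Fm F h2) (Fm F h1) = Fm F h3.
Proof. symmetry. apply Fm_comp. Qed.

Lemma alpha_mono (m : OneMor F G) {b' b : idx G} :
  le b' b -> le (alpha m b') (alpha m b).
Proof.
  intros Hb. destruct (excluded_middle_informative (b' = b)) as [<-|Hne].
  - apply le_refl.
  - exact (proj1 (alpha_strict m (conj Hb Hne))).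
Qed.

Lemma mor_le_refl (m : OneMor F G) : mor_le m m.
Proof. intros b. exists (le_refl _). rewrite Fm_id, comp_id_r. reflexivity. Qed.

Lemma mor_le_trans {x y z : OneMor F G} : mor_le x y -> mor_le y z -> mor_le x z.
Proof.
  intros Hxy Hyz b. destruct (Hxy b) as [h1 E1], (Hyz b) as [h2 E2].
  exists (le_trans h1 h2).
  rewrite E2, E1, <- comp_assoc, (Fm_compose h2 h1 (le_trans h1 h2)). reflexivity.
Qed.

Section Raise.
Variables (m : OneMor F G) (a : idx G -> idx F).
Hypothesis a_strict : forall b b', lt b b' -> lt (a b) (a b').
Hypothesis le_alpha_a : forall b, le (alpha m b) (a b).

Lemma raise_nat (b b' : idx G) (h : le b' b) (h' : le (a b') (a b)) :
  comp (Fm G h) (comp (phi m b) (Fm F (le_alpha_a b))) =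
  comp (comp (phi m b') (Fm F (le_alpha_a b'))) (Fm F h').
Proof.
  pose proof (alpha_mono m h) as k.
  rewrite comp_assoc, (phi_nat (o:=m) h k), <- !comp_assoc.
  f_equal. rewrite !(Fm_compose _ _ (le_trans k (le_alpha_a b))). reflexivity.
Qed.

Definition raise : OneMor F G :=
  {| alpha := a;
     alpha_strict := a_strict;
     phi := fun b => comp (phi m b) (Fm F (le_alpha_a b));
     phi_nat := raise_nat |}.

Lemma mor_le_raise (u : OneMor F G) :
  mor_le m u -> (forall b, le (alpha u b) (a b)) -> mor_le u raise.
Proof.
  intros Hmu Hua b. destruct (Hmu b) as [k E]. exists (Hua b). simpl.
  rewrite E, <- comp_assoc, (Fm_compose _ _ (le_alpha_a b)). reflexivity.
Qed.

End Raise.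

Arguments raise {m a} a_strict le_alpha_a.
Arguments mor_le_raise {m a} a_strict le_alpha_a {u}.

Lemma mor_le_common_ub {m u v : OneMor F G} :
  mor_le m u -> mor_le m v -> exists w, mor_le u w /\ mor_le v w.
Proof.
  intros Hmu Hmv.
  pose (ub_uv b := ub (alpha u b) (alpha v b)).
  pose (bound := strict_bound ub_uv).
  assert (Hu : forall b, le (alpha u b) (bound b))
    by (intros b; exact (le_trans (le_ub_l _ _) (le_strict_bound ub_uv b))).
  assert (Hv : forall b, le (alpha v b) (bound b))
    by (intros b; exact (le_trans (le_ub_r _ _) (le_strict_bound ub_uv b))).
  assert (Hm : forall b, le (alpha m b) (bound b))
    by (intros b; destruct (Hmu b) as [k _]; exact (le_trans k (Hu b))).
  exists (raise (strict_bound_lt ub_uv) Hm).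
  split; [exact (mor_le_raise _ _ Hmu Hu)|exact (mor_le_raise _ _ Hmv Hv)].
Qed.

Lemma connected_common_ub {x y : OneMor F G} :
  connected x y -> exists z, mor_le x z /\ mor_le y z.
Proof.
  induction 1 as [x y Hxy|x|x y _ [z [Hx Hy]]|x y z _ [p [Hxp Hyp]] _ [q [Hyq Hzq]]].
  - exists y. split; [exact Hxy|apply mor_le_refl].
  - exists x. split; apply mor_le_refl.
  - exists z. split; assumption.
  - destruct (mor_le_common_ub Hyp Hyq) as [w [Hpw Hqw]].
    exists w. split; [exact (mor_le_trans Hxp Hpw)|exact (mor_le_trans Hzq Hqw)].
Qed.

End OneMorphisms.

Theorem corollary3p7 (C : Category) (F G : ProObj C) (m : OneMor F G) :
  component_directed m.
Proof.
  intros m1 m2 H1 H2.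
  destruct (connected_common_ub (rst_trans _ _ _ _ _ (rst_sym _ _ _ _ H1) H2))
    as [z [Hz1 Hz2]].
  exists z. split; [|split; assumption].
  exact (rst_trans _ _ _ _ _ H1 (rst_step _ _ _ _ Hz1)).
Qed.
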